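(* Let $X$ be a shift space over $\mathcal{A}$, $\sigma:\mathcal{A}^*\to\mathcal{B}^*$ an injective and strongly left proper morphism with first letter $\ell$, $Y$ the image of $X$ under $\sigma$ and $v\in\mathcal{L}(X)$. A word $u$ is a bispecial extended image of $v$ if and only if there exist $(a_1,b_1),(a_2,b_2)\in E_X(v)$ with $a_1\ne a_2$, $b_1\ne b_2$ and $u=s(a_1,a_2)\,\sigma(v)\,p(b_1,b_2)$. In particular, the antecedent $v$ of a bispecial word $u\in\mathcal{L}(Y)$ is bispecial in $X$.
   Context: A shift space over a finite alphabet $\mathcal{A}$ is a closed shift-invariant $X\subseteq\mathcal{A}^{\mathbb{Z}}$ in which all letters occur; $\mathcal{L}(X)$ is its set of finite factors. For $w\in\mathcal{L}(X)$: $E^-_X(w)=\{a: aw\in\mathcal{L}(X)\}$, $E^+_X(w)=\{b:wb\in\mathcal{L}(X)\}$, $E_X(w)=\{(a,b):awb\in\mathcal{L}(X)\}$; $w$ is bispecial if $\#E^-_X(w)\ge2$ and $\#E^+_X(w)\ge2$. Morphisms are non-erasing; $\sigma$ is strongly left proper with first letter $\ell$ if every $\sigma(a)$ starts with $\ell$ and contains exactly one occurrence of $\ell$. The image of $X$ under $\sigma$ is $Y=\{S^k\sigma(x):x\in X,0\le k<|\sigma(x_0)|\}$. For $a_1,a_2\in\mathcal{A}$, $s(a_1,a_2)$ (resp. $p(a_1,a_2)$) is the longest common suffix (resp. prefix) of $\sigma(a_1)$ and $\sigma(a_2)$. Fact (antecedents): for every non-empty $u\in\mathcal{L}(Y)$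 containing $\ell$ there is a unique triple $(s,v,p)$ with $v\in\mathcal{L}(X)$, $u=s\sigma(v)p$, such that for some $(a,b)\in E_X(v)$, $s$ is a proper suffix of $\sigma(a)$ and $p$ is a non-empty prefix of $\sigma(b)$. Then $v$ is called the antecedent of $u$ and $u$ an extended image of $v$ (extended images always contain $\ell$). *)

From mathcomp Require Import all_boot all_order all_algebra.
Set Implicit Arguments. Unset Strict Implicit. Unset Printing Implicit Defensive.
Import GRing.Theory Num.Theory.
Local Open Scope ring_scope.

Section Defs.
Variables (A B : finType).

Definition shift (x : int -> A) : int -> A := fun i => x (i + 1).

Definition factor_at (T : Type) (x : int -> T) (i : int) (n : nat) : seq T :=
  map (fun j : nat => x (i + j%:Z)) (iota 0 n).

(* shift space: closed (product topology), shift-invariant (S X = X),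
   and every letter occurs *)
Definition shift_space (X : (int -> A) -> Prop) : Prop :=
  [/\ (forall x, X x <-> X (shift x)),
      (forall x, (forall n : nat, exists y, X y /\
                    forall i : int, (`|i| <= n)%N -> y i = x i) -> X x) &
      (forall a : A, exists x, X x /\ exists i, x i = a)].

Definition lang (T : Type) (X : (int -> T) -> Prop) (w : seq T) : Prop :=
  exists x, X x /\ exists i, w = factor_at x i (size w).

Definition ext_pair (X : (int -> A) -> Prop) (w : seq A) (a b : A) : Prop :=
  lang X (a :: rcons w b).

Definition sigma_word (sigma : A -> seq B) (w : seq A) : seq B :=
  flatten (map sigma w).

Definition non_erasing (sigma : A -> seq B) : Prop :=
  forall a, sigma a != [::].

Definition strongly_left_proper (sigma : A -> seq B) (l : B) : Prop :=
  forall a, (exists w, sigma a = l :: w) /\ count_mem l (sigma a) = 1%N.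

(* position of the block sigma(x_n) inside sigma(x); sigma(x_0) starts at 0 *)
Definition pos (sigma : A -> seq B) (x : int -> A) (n : int) : int :=
  match n with
  | Posz m => (\sum_(i < m) size (sigma (x (Posz i))))%:Z
  | Negz m => - (\sum_(i < m.+1) size (sigma (x (Negz i))))%:Z
  end.

(* z is the bi-infinite word sigma(x) *)
Definition is_sigma_img (sigma : A -> seq B) (x : int -> A) (z : int -> B) : Prop :=
  forall n : int, factor_at z (pos sigma x n) (size (sigma (x n))) = sigma (x n).

Definition image_space (X : (int -> A) -> Prop) (sigma : A -> seq B)
  (y : int -> B) : Prop :=
  exists x z (k : nat), [/\ X x, is_sigma_img sigma x z,
     (k < size (sigma (x 0)))%N & forall i, y i = z (i + k%:Z)].

Definition ext_image (X : (int -> A) -> Prop) (sigma : A -> seq B) (l : B)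
  (u : seq B) (v : seq A) : Prop :=
  [/\ lang (image_space X sigma) u, u != [::], l \in u &
    exists (s p : seq B) (a b : A),
      [/\ lang X v, ext_pair X v a b,
          suffix s (sigma a) && (size s < size (sigma a))%N,
          prefix p (sigma b) && (p != [::]) &
          u = s ++ sigma_word sigma v ++ p]].
End Defs.

Section Bisp.
Variable T : eqType.
Definition bispecial (L : seq T -> Prop) (w : seq T) : Prop :=
  [/\ L w,
      exists a1 a2, [/\ a1 != a2, L (a1 :: w) & L (a2 :: w)] &
      exists b1 b2, [/\ b1 != b2, L (rcons w b1) & L (rcons w b2)]].

Fixpoint lcp (s t : seq T) : seq T :=
  match s, t with
  | x :: s', y :: t' => if x == y then x :: lcp s' t' else [::]
  | _, _ => [::]
  end.
Definition lcs (s t : seq T) : seq T := rev (lcp (rev s) (rev t)).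
End Bisp.

(* Since every sigma(a) starts with l and contains no other l, the letters l of
   sigma(x) mark exactly its block boundaries; with injectivity of sigma this
   synchronizes every occurrence of an extended image u = s sigma(v) p inside
   sigma(t), t in L(X): it comes from an occurrence of a v b in t with s a proper
   suffix of sigma(a) and p a prefix of sigma(b). So each left (right) extension
   letter of u in L(Y) is the letter preceding s in sigma(a) (following p in
   sigma(b) l) for some (a, b) in E_X(v). Two distinct left and two distinct right
   extensions yield two pairs (a1, b1), (a2, b2) differing in both coordinates,
   and then s and p are the longest common suffix and prefix of their images.
   Conversely, the letters preceding lcs and following lcp differ for such pairs,
   and the words a_i v b_i e of L(X) exhibit the four extensions.
   Factors of Y are related to L(X) through the explicit bi-infinite word sigma(x):
   its factors are those of the sigma(t), and each lies strictly inside one. *)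

From mathcomp Require Import all_boot all_order all_algebra.
From mathcomp Require Import zify.
Set Implicit Arguments. Unset Strict Implicit. Unset Printing Implicit Defensive.
Import GRing.Theory.

Section Sequences.
Variable T : Type.
Implicit Types s t : seq T.

Lemma cat_eq_cat s1 s2 t1 t2 : s1 ++ s2 = t1 ++ t2 ->
  (exists r, s1 = t1 ++ r /\ t2 = r ++ s2) \/
  (exists r, t1 = s1 ++ r /\ s2 = r ++ t2).
Proof.
elim: s1 t1 => [|x s1 IH] [|y t1] /=.
- by move=> ->; left; exists [::].
- by move=> ->; right; exists (y :: t1).
- by move=> <-; left; exists (x :: s1).
- by case=> -> /IH [[r [-> ->]]|[r [-> ->]]]; [left|right]; exists r.
Qed.

Lemma size_factor_at (x : int -> T) i n : size (factor_at x i n) = n.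
Proof. by rewrite size_map size_iota. Qed.

Lemma nth_factor_at d (x : int -> T) i n k :
  (k < n)%N -> nth d (factor_at x i n) k = x (i + k%:Z)%R.
Proof. by move=> kn; rewrite (nth_map 0%N) ?size_iota // nth_iota. Qed.

Lemma factor_at_cat (x : int -> T) i m n :
  factor_at x i (m + n) = factor_at x i m ++ factor_at x (i + m%:Z)%R n.
Proof.
rewrite /factor_at iotaD map_cat; congr (_ ++ _).
rewrite add0n -{1}(addn0 m) iotaDl -map_comp; apply: eq_map => j /=.
by rewrite PoszD addrA.
Qed.

Lemma factor_at_drop (x : int -> T) i m n k : (m + n <= k)%N ->
  factor_at x (i + m%:Z)%R n = take n (drop m (factor_at x i k)).
Proof.
move=> mnk; rewrite -(subnKC mnk) -addnA !factor_at_cat.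
by rewrite drop_size_cat ?size_factor_at // take_size_cat ?size_factor_at.
Qed.

Lemma lang_infix (X : (int -> T) -> Prop) s1 w s2 :
  lang X (s1 ++ w ++ s2) -> lang X w.
Proof.
case=> x [Xx [i hi]]; exists x; split => //; exists (i + (size s1)%:Z)%R.
rewrite (@factor_at_drop _ _ _ _ (size (s1 ++ w ++ s2))).
  by rewrite -hi drop_size_cat // take_size_cat.
by rewrite !size_cat leq_add2l leq_addr.
Qed.

Lemma lang_rcons (X : (int -> T) -> Prop) w :
  lang X w -> exists e, lang X (rcons w e).
Proof.
case=> x [Xx [i hi]]; exists (x (i + (size w)%:Z)%R); exists x; split => //.
exists i; rewrite size_rcons -addn1 factor_at_cat -hi -cats1.
by rewrite /factor_at /= addr0.
Qed.
End Sequences.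

Section LongestCommonPrefix.
Variable T : eqType.
Implicit Types s t : seq T.

Lemma lcp_catl p s t : lcp (p ++ s) (p ++ t) = p ++ lcp s t.
Proof. by elim: p => //= x p ->; rewrite eqxx. Qed.

Lemma lcs_catr p s t : lcs (s ++ p) (t ++ p) = lcs s t ++ p.
Proof. by rewrite /lcs !rev_cat lcp_catl rev_cat revK. Qed.

Lemma lcp_split s t :
  exists s' t', [/\ s = lcp s t ++ s', t = lcp s t ++ t' & lcp s' t' = [::]].
Proof.
elim: s t => [|x s IH] [|y t] /=.
- by exists [::], [::].
- by exists [::], (y :: t).
- by exists (x :: s), [::].
case: eqP => [<-|neq]; last by exists (x :: s), (y :: t); rewrite /=; case: eqP.
by have [s' [t' [hs ht ?]]] := IH t; exists s', t'; rewrite /= -hs -ht.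
Qed.

Lemma lcp_nth0_neq d s t : nth d s 0 != nth d t 0 -> lcp s t = [::].
Proof. by case: s => [|x s]; case: t => [|y t] //= /negbTE ->. Qed.
End LongestCommonPrefix.

Section SigmaOfBiinfiniteWord.
Variables (A B : finType) (sigma : A -> seq B) (x : int -> A).
Local Open Scope ring_scope.
Notation pos := (pos sigma x).

Definition image_factor i m := sigma_word sigma (factor_at x i m).

Lemma image_factor_cat i m n :
  image_factor i (m + n) = image_factor i m ++ image_factor (i + m%:Z) n.
Proof. by rewrite /image_factor /sigma_word factor_at_cat map_cat flatten_cat. Qed.

Lemma image_factor1 i : image_factor i 1 = sigma (x i).
Proof. by rewrite /image_factor /sigma_word /factor_at /= addr0 cats0. Qed.

Lemma pos0 : pos 0 = 0.
Proof. by rewrite /= big_ord0. Qed.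

Lemma pos_add1 n : pos (n + 1) = pos n + (size (sigma (x n)))%:Z.
Proof.
case: n => [m|[|m]].
- have -> : Posz m + 1 = Posz m.+1 by lia.
  by rewrite /= big_ord_recr PoszD.
- by rewrite /= big_ord0 big_ord1 addNr.
- have -> : Negz m.+1 + 1 = Negz m by lia.
  by rewrite /= [in RHS]big_ord_recr /= PoszD opprD -addrA addNr addr0.
Qed.

Lemma pos_addn i m : pos (i + m%:Z) = pos i + (size (image_factor i m))%:Z.
Proof.
elim: m => [|m IH]; first by rewrite !addr0.
rewrite -addn1 image_factor_cat size_cat image_factor1 PoszD addrA pos_add1 IH.
by rewrite PoszD -!addrA.
Qed.

Lemma image_factor_sub (lo i : int) M m : lo <= i -> i + m%:Z <= lo + M%:Z ->
  exists L R, image_factor lo M = L ++ image_factor i m ++ R /\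
              pos i = pos lo + (size L)%:Z.
Proof.
move=> lo_i; have [d ->] : exists d : nat, i = lo + d%:Z by exists (absz (i - lo)); lia.
move=> im_M.
have [e ->] : exists e : nat, M = (d + m + e)%N by exists (M - (d + m))%N; lia.
exists (image_factor lo d), (image_factor (lo + d%:Z + m%:Z) e).
by rewrite !image_factor_cat PoszD addrA catA pos_addn.
Qed.

Lemma factor_at_is_sigma_img z : is_sigma_img sigma x z ->
  forall i m, factor_at z (pos i) (size (image_factor i m)) = image_factor i m.
Proof.
move=> zx i; elim=> [|m IH] //.
by rewrite -addn1 image_factor_cat size_cat factor_at_cat IH -pos_addn image_factor1 zx.
Qed.

Hypothesis sigma_ne : non_erasing sigma.

Lemma leq_size_image_factor i m : (m <= size (image_factor i m))%N.
Proof.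
elim: m => [|m IH] //; rewrite -addn1 image_factor_cat size_cat image_factor1.
by rewrite leq_add // lt0n size_eq0 sigma_ne.
Qed.

Lemma pos_opp_le (N : nat) : pos (- N%:Z) <= - N%:Z.
Proof.
have := pos_addn (- N%:Z) N; rewrite addNr pos0.
by have := leq_size_image_factor (- N%:Z) N; lia.
Qed.

Lemma pos_ge (N : nat) : N%:Z <= pos N%:Z.
Proof.
have := pos_addn 0 N; rewrite add0r pos0 add0r => ->.
by rewrite lez_nat leq_size_image_factor.
Qed.

Lemma image_factor_around (q : int) (n : nat) : exists i m a,
  [/\ (0 < a)%N, (a + n < size (image_factor i m))%N & q = pos i + a%:Z].
Proof.
set N := (absz q).+1; exists (- N%:Z), (N + N + n)%N, (absz (q - pos (- N%:Z))).
have := pos_opp_le N; have := pos_ge (N + n).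
have -> : pos (N + n)%N%:Z = pos (- N%:Z + (N + N + n)%N%:Z) by congr pos; lia.
by rewrite pos_addn => ? ?; split; lia.
Qed.

(* [pos (- N) <= - N < k < N <= pos N], so the window [sigma (x_(-N) .. x_(N-1))]
   covers position [k] of [sigma x]. *)
Definition sigma_seq (d : B) (k : int) : B :=
  let N := (absz k).+1 in
  nth d (image_factor (- N%:Z) (N + N)) (absz (k - pos (- N%:Z))).

Lemma sigma_seq_pos d i m j : (j < size (image_factor i m))%N ->
  sigma_seq d (pos i + j%:Z) = nth d (image_factor i m) j.
Proof.
move=> j_lt; rewrite /sigma_seq.
set k := pos i + j%:Z; set N := (absz k).+1; set i0 := - N%:Z.
have i0_le : pos i0 <= i0 := pos_opp_le N.
have N_le := pos_ge N.
have end_i0 : pos (i0 + (N + N)%N%:Z) = pos N%:Z by congr pos; rewrite /i0; lia.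
rewrite pos_addn in end_i0.
set lo := i0 - (absz i)%:Z; set M := (absz i + N + N + absz i + m)%N.
have [L [R [eM eL]]] := @image_factor_sub lo i M m ltac:(lia) ltac:(lia).
have [L0 [R0 [eM0 eL0]]] := @image_factor_sub lo i0 M (N + N) ltac:(lia) ltac:(lia).
have k_lt : (absz (k - pos i0) < size (image_factor i0 (N + N)))%N by lia.
have : nth d (L ++ image_factor i m ++ R) (size L + j) =
       nth d (L0 ++ image_factor i0 (N + N) ++ R0) (size L0 + absz (k - pos i0)).
  by rewrite -eM -eM0; congr nth; lia.
by rewrite !nth_cat !ltnNge !leq_addr /= !addKn -!ltnNge j_lt k_lt => ->.
Qed.

Lemma factor_at_sigma_seq d i m :
  factor_at (sigma_seq d) (pos i) (size (image_factor i m)) = image_factor i m.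
Proof.
apply: (@eq_from_nth _ d); rewrite ?size_factor_at // => j j_lt.
by rewrite nth_factor_at // (sigma_seq_pos d j_lt).
Qed.

Lemma sigma_seq_is_sigma_img d : is_sigma_img sigma x (sigma_seq d).
Proof. by move=> n; rewrite -(image_factor1 n) factor_at_sigma_seq. Qed.
End SigmaOfBiinfiniteWord.

Section LanguageOfImage.
Variables (A B : finType) (X : (int -> A) -> Prop) (sigma : A -> seq B).
Hypothesis sigma_ne : non_erasing sigma.
Local Open Scope ring_scope.

Lemma lang_image_factor t s1 w s2 : lang X t ->
  sigma_word sigma t = s1 ++ w ++ s2 -> lang (image_space X sigma) w.
Proof.
move=> [x [Xx [i def_t]]] def_st.
have {}def_st : image_factor sigma x i (size t) = s1 ++ w ++ s2.
  by rewrite /image_factor -def_t.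
case x0: (sigma (x 0)) (sigma_ne (x 0)) => [|d ?] // _.
exists (sigma_seq sigma x d); split.
  exists x, (sigma_seq sigma x d), 0%N; split => //.
  - exact: sigma_seq_is_sigma_img.
  - by rewrite x0.
  - by move=> j; rewrite addr0.
exists (pos sigma x i + (size s1)%:Z).
rewrite (@factor_at_drop _ _ _ _ _ (size (image_factor sigma x i (size t)))).
  by rewrite factor_at_sigma_seq // def_st drop_size_cat // take_size_cat.
by rewrite def_st !size_cat leq_add2l leq_addr.
Qed.

Lemma lang_image_interior w : lang (image_space X sigma) w ->
  exists t s1 s2, [/\ lang X t, s1 != [::], s2 != [::] &
                      sigma_word sigma t = s1 ++ w ++ s2].
Proof.
move=> [y [[x [z [k [Xx zx _ def_y]]]] [j def_w]]].
have {}def_w : w = factor_at z (j + k%:Z) (size w).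
  by rewrite {1}def_w; apply: eq_map => n; rewrite def_y addrAC.
have [i [m [a [a_gt0 lt_wF def_q]]]] :=
  image_factor_around x sigma_ne (j + k%:Z) (size w).
rewrite {}def_q in def_w.
set F := image_factor sigma x i m in lt_wF.
exists (factor_at x i m), (take a F), (drop (size w) (drop a F)); split.
- by exists x; split => //; exists i; rewrite size_factor_at.
- by rewrite -size_eq0 size_take (leq_trans _ lt_wF) ?leq_addr // -lt0n.
- by rewrite -size_eq0 !size_drop -subnDA subn_eq0 -ltnNge.
- rewrite {1}def_w (factor_at_drop _ _ (ltnW lt_wF)) factor_at_is_sigma_img //.
  by rewrite !cat_take_drop.
Qed.
End LanguageOfImage.

Section Synchronization.
Variables (A B : finType) (sigma : A -> seq B) (l : B).
Hypothesis slp : strongly_left_proper sigma l.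
Notation sw := (sigma_word sigma).

Lemma slp_image a : exists w, sigma a = l :: w /\ l \notin w.
Proof.
have [[w def_a] cnt] := slp a; exists w; split => //.
by apply/count_memPn; move: cnt; rewrite def_a /= eqxx add1n => -[].
Qed.

Lemma sigma_word_cons a t : sw (a :: t) = sigma a ++ sw t.
Proof. by []. Qed.

Lemma sigma_word_rcons t a : sw (rcons t a) = sw t ++ sigma a.
Proof. by rewrite /sigma_word map_rcons flatten_rcons. Qed.

Lemma nth0_sigma_word t : nth l (sw t) 0 = l.
Proof.
by case: t => [|a t] //; have [w [def_a _]] := slp_image a; rewrite sigma_word_cons def_a.
Qed.

Lemma sigma_word_split_l t s g : sw t = s ++ l :: g ->
  exists t1 t2, [/\ t = t1 ++ t2, sw t1 = s & sw t2 = l :: g].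
Proof.
elim: t s => [|a t IH] [|c s] //; first by exists [::], (a :: t).
have [w [def_a lw]] := slp_image a.
rewrite sigma_word_cons def_a /= => -[<-] /esym /cat_eq_cat [[r [def_w def_s]]|[r []]].
  have [t1 [t2 [-> st1 st2]]] := IH r def_s.
  by exists (a :: t1), t2; rewrite sigma_word_cons def_a st1 def_w.
case: r => [|e r] def_w def_t.
  by exists [:: a], t; rewrite sigma_word_cons def_a def_w !cats0 def_t.
by case: def_t => def_e _; move: lw; rewrite def_w -def_e mem_cat mem_head orbT.
Qed.

Lemma sigma_word_sync_left t s' s : sw t = s' ++ s -> s' != [::] -> l \notin s ->
  exists t' a s'',
    [/\ t = rcons t' a, sigma a = s'' ++ s, s'' != [::] & s' = sw t' ++ s''].
Proof.
case/lastP: t => [|t a]; first by case: s'.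
rewrite sigma_word_rcons => /cat_eq_cat[[r [_ def_s]]|[r [def_s' def_a]]] _ ls.
  have [w [def_a _]] := slp_image a.
  by move: ls; rewrite def_s def_a mem_cat mem_head orbT.
exists t, a, r; split => //; apply: contraNneq ls => r0.
by have [w [def_a' _]] := slp_image a; rewrite -[s]/([::] ++ s) -r0 -def_a def_a' mem_head.
Qed.

Lemma sigma_word_sync_right t p' s : sw t = l :: p' ++ s -> l \notin p' ->
  exists b t' s', [/\ t = b :: t', sigma b = l :: p' ++ s' & s = s' ++ sw t'].
Proof.
case: t => [|b t] //; rewrite sigma_word_cons -cat_cons.
case/cat_eq_cat => [[r [def_b def_s]]|[[|e r] []]].
- by exists b, t, r; rewrite def_b.
- by rewrite cats0 => def_b def_t _; exists b, t, [::]; rewrite cats0 def_b def_t.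
case: t => [|c t] def_p; first by case: s.
have [wc [def_c _]] := slp_image c; have [wb [def_b _]] := slp_image b.
rewrite sigma_word_cons def_c => -[le _].
by move: def_p; rewrite def_b -le => -[->]; rewrite mem_cat mem_head orbT.
Qed.

Lemma sigma_eq_cat_sigma a b r : sigma a = r ++ sigma b -> r = [::].
Proof.
have [w [-> lw]] := slp_image a; have [w' [-> _]] := slp_image b.
by case: r => // e r [_ def_w]; move: lw; rewrite def_w mem_cat mem_head orbT.
Qed.

Hypothesis sw_inj : injective sw.

Lemma sigma_inj : injective sigma.
Proof.
by move=> a b eq_ab; have /sw_inj[] : sw [:: a] = sw [:: b] by rewrite /sigma_word /= eq_ab.
Qed.

Lemma sigma_word_sync t s' s v p' s2 :
  sw t = s' ++ s ++ sw v ++ l :: p' ++ s2 -> s' != [::] -> l \notin s -> l \notin p' ->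
  exists t1 a b t2 s1 s3,
    [/\ t = t1 ++ a :: v ++ b :: t2, sigma a = s1 ++ s, s1 != [::],
        s' = sw t1 ++ s1 & sigma b = l :: p' ++ s3 /\ s2 = s3 ++ sw t2].
Proof.
have [g def_g] : exists g, sw v ++ l :: p' ++ s2 = l :: g.
  case: v => [|a v]; first by exists (p' ++ s2).
  have [w [def_a _]] := slp_image a.
  by exists (w ++ sw v ++ l :: p' ++ s2); rewrite sigma_word_cons def_a -catA.
move=> def_t s'0 ls lp'.
move: def_t; rewrite catA def_g => /sigma_word_split_l[t1 [t' [-> st1]]].
rewrite -def_g => /sigma_word_split_l[v' [t3 [-> /sw_inj -> st3]]].
have [t1' [a [s1 [-> def_a s10 ->]]]] := sigma_word_sync_left st1 s'0 ls.
have [b [t2 [s3 [-> def_b ->]]]] := sigma_word_sync_right st3 lp'.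
by exists t1', a, b, t2, s1, s3; rewrite cat_rcons.
Qed.
End Synchronization.

Lemma separate_two_maps (T : Type) (U : eqType) (Q : T -> Prop) (C D : T -> U)
    q1 q2 q3 q4 :
  Q q1 -> Q q2 -> Q q3 -> Q q4 -> C q1 != C q2 -> D q3 != D q4 ->
  exists r1 r2, [/\ Q r1, Q r2, C r1 != C r2 & D r1 != D r2].
Proof.
move=> Q1 Q2 Q3 Q4 C12 D34.
have [D12|D12] := eqVneq (D q1) (D q2); last by exists q1, q2.
have [q [Qq Dq]] : exists q, Q q /\ D q != D q1.
  have [D31|D31] := eqVneq (D q3) (D q1); last by exists q3; split.
  by exists q4; split; rewrite // -D31 eq_sym.
have [Cq|Cq] := eqVneq (C q) (C q1).
- by exists q2, q; split => //; rewrite ?Cq -?D12 eq_sym.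
- by exists q1, q; split => //; rewrite eq_sym.
Qed.

Lemma bispecial_of_ext_pairs (A : finType) (X : (int -> A) -> Prop) v a1 b1 a2 b2 :
  ext_pair X v a1 b1 -> ext_pair X v a2 b2 -> a1 != a2 -> b1 != b2 ->
  bispecial (lang X) v.
Proof.
rewrite /ext_pair -!cats1 => L1 L2 a12 b12.
have lang_left a b : lang X (a :: v ++ [:: b]) -> lang X (a :: v).
  exact: (@lang_infix _ _ [::] (a :: v) [:: b]).
have lang_right a b : lang X (a :: v ++ [:: b]) -> lang X (v ++ [:: b]).
  by move=> L; apply: (@lang_infix _ X [:: a] _ [::]); rewrite cats0.
split; first exact: (@lang_infix _ _ [:: a1] _ [:: b1]).
- by exists a1, a2; split; [|apply: lang_left L1|apply: lang_left L2].
- by exists b1, b2; rewrite -!cats1; split; [|apply: lang_right L1|apply: lang_right L2].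
Qed.

Section ExtendedImages.
Variables (A B : finType) (X : (int -> A) -> Prop) (sigma : A -> seq B) (l : B).
Hypothesis sigma_ne : non_erasing sigma.
Hypothesis sw_inj : injective (sigma_word sigma).
Hypothesis slp : strongly_left_proper sigma l.
Notation sw := (sigma_word sigma).
Notation Y := (image_space X sigma).

Lemma lcp_sigma_neq b1 b2 : b1 != b2 -> exists r1 r2,
  [/\ sigma b1 = lcp (sigma b1) (sigma b2) ++ r1,
      sigma b2 = lcp (sigma b1) (sigma b2) ++ r2 & nth l r1 0 != nth l r2 0].
Proof.
move=> b12; have [r1 [r2 [def1 def2 r12]]] := lcp_split (sigma b1) (sigma b2).
exists r1, r2; split => //.
have [w1 [def_b1 _]] := slp_image slp b1; have [w2 [def_b2 _]] := slp_image slp b2.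
have lcpE : lcp (sigma b1) (sigma b2) = l :: lcp w1 w2 by rewrite def_b1 def_b2 /= eqxx.
have head_neq_l b r e : sigma b = lcp (sigma b1) (sigma b2) ++ e :: r -> e != l.
  have [w [-> lw]] := slp_image slp b; rewrite lcpE => -[def_w].
  by apply: contraNneq lw => el; rewrite def_w el mem_cat mem_head orbT.
case: r1 r2 def1 def2 r12 => [|e1 r1] [|e2 r2] def1 def2 //=.
- by move: b12; rewrite (sigma_inj sw_inj (etrans def1 (esym def2))) eqxx.
- by rewrite eq_sym (head_neq_l _ _ _ def2).
- by rewrite (head_neq_l _ _ _ def1).
- by case: eqP.
Qed.

Lemma lcs_sigma_neq a1 a2 : a1 != a2 -> exists r1 r2 c1 c2,
  [/\ sigma a1 = r1 ++ c1 :: lcs (sigma a1) (sigma a2),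
      sigma a2 = r2 ++ c2 :: lcs (sigma a1) (sigma a2) & c1 != c2].
Proof.
move=> a12; have [r1 [r2 [e1 e2 r12]]] := lcp_split (rev (sigma a1)) (rev (sigma a2)).
set S := lcs (sigma a1) (sigma a2).
have def1 : sigma a1 = rev r1 ++ S by rewrite -[LHS]revK e1 rev_cat.
have def2 : sigma a2 = rev r2 ++ S by rewrite -[LHS]revK e2 rev_cat.
have S_neq : rev r1 ++ S != rev r2 ++ S.
  by rewrite -def1 -def2; apply: contra_neq a12; apply: sigma_inj.
case: r1 r2 {e1 e2} def1 def2 S_neq r12 => [|c1 r1] [|c2 r2] def1 def2 //= S_neq.
- by rewrite eqxx in S_neq.
- move: def2; rewrite -[S]/(rev [::] ++ S) -def1 => /(sigma_eq_cat_sigma slp).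
  by move/(congr1 size); rewrite size_rev.
- move: def1; rewrite -[S]/(rev [::] ++ S) -def2 => /(sigma_eq_cat_sigma slp).
  by move/(congr1 size); rewrite size_rev.
move=> c12; exists (rev r1), (rev r2), c1, c2.
by rewrite def1 def2 !rev_cons !cat_rcons; split => //; case: eqP c12.
Qed.

Lemma ext_image_shape u v : ext_image X sigma l u v ->
  exists s p', [/\ u = s ++ sw v ++ l :: p', l \notin s & l \notin p'].
Proof.
case=> _ _ _ [s [p [a [b [_ _ /andP[/suffixP[r def_a] lt_s] /andP[/prefixP[r' def_b] p0]]]]]].
move=> ->.
have [w [def_a' lw]] := slp_image slp a; have [w' [def_b' lw']] := slp_image slp b.
case: p def_b p0 => [|e p'] // def_b _; move: def_b; rewrite def_b' => -[<- def_w'].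
exists s, p'; split => //; last by apply: contra lw'; rewrite def_w' mem_cat => ->.
case: r def_a lt_s => [|e' r] def_a lt_s; first by rewrite def_a ltnn in lt_s.
move: def_a; rewrite def_a' => -[_ def_w].
by apply: contra lw; rewrite def_w mem_cat orbC => ->.
Qed.

Section Forward.
Variables (v : seq A) (s p' : seq B).
Hypotheses (ls : l \notin s) (lp' : l \notin p').
Local Notation u := (s ++ sw v ++ l :: p').

Definition frames a b := [/\ ext_pair X v a b,
  exists2 s1, s1 != [::] & sigma a = s1 ++ s & exists s3, sigma b = l :: p' ++ s3].

Definition letter_before a := nth l (rev (sigma a)) (size s).

(* The default [l] is the letter that follows [sigma b] in any image. *)
Definition letter_after b := nth l (sigma b) (size p').+1.

Lemma letter_before_cat a s1 : sigma a = s1 ++ s -> letter_before a = nth l (rev s1) 0.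
Proof. by rewrite /letter_before => ->; rewrite rev_cat nth_cat size_rev ltnn subnn. Qed.

Lemma letter_after_cat b s3 : sigma b = l :: p' ++ s3 -> letter_after b = nth l s3 0.
Proof. by rewrite /letter_after => ->; rewrite /= nth_cat ltnn subnn. Qed.

Lemma frames_occurrence t s' s2 : lang X t -> sw t = s' ++ u ++ s2 -> s' != [::] ->
  exists a b, [/\ frames a b, letter_before a = nth l (rev s') 0 &
                  letter_after b = nth l s2 0].
Proof.
move=> Lt + s'0; rewrite -!catA cat_cons => def_t.
have [t1 [a [b [t2 [s1 [s3 [def_t' def_a s10 -> [def_b ->]]]]]]]] :=
  sigma_word_sync slp sw_inj def_t s'0 ls lp'.
exists a, b; split.
- split; [|by exists s1|by exists s3].
  by apply: (@lang_infix _ X t1 _ t2); rewrite /= cat_rcons -def_t'.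
- by rewrite (letter_before_cat def_a) rev_cat nth_cat size_rev; case: (s1) s10.
- by rewrite (letter_after_cat def_b) nth_cat; case: (s3) => //=; rewrite nth0_sigma_word.
Qed.

Lemma bispecial_lcs_lcp : bispecial (lang Y) u -> exists a1 b1 a2 b2,
  [/\ ext_pair X v a1 b1, ext_pair X v a2 b2, a1 != a2, b1 != b2 &
      u = lcs (sigma a1) (sigma a2) ++ sw v ++ lcp (sigma b1) (sigma b2)].
Proof.
case=> _ [c1 [c2 [c12 Lc1 Lc2]]] [d1 [d2 [d12 Ld1 Ld2]]].
have left_frame c : lang Y (c :: u) ->
    exists2 q : A * A, frames q.1 q.2 & letter_before q.1 = c.
  case/(lang_image_interior sigma_ne) => t [s' [s2 [Lt _ _]]].
  rewrite cat_cons -[s' ++ _]cat_rcons => /(frames_occurrence Lt) occ.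
  have [|a [b [fr lb _]]] := occ; first by case: (s').
  by exists (a, b); rewrite // lb rev_rcons.
have right_frame d : lang Y (rcons u d) ->
    exists2 q : A * A, frames q.1 q.2 & letter_after q.2 = d.
  case/(lang_image_interior sigma_ne) => t [s' [s2 [Lt s'0 _]]].
  rewrite cat_rcons => /(frames_occurrence Lt) occ; have [a [b [fr _ la]]] := occ s'0.
  by exists (a, b).
have [q1 F1 C1] := left_frame c1 Lc1; have [q2 F2 C2] := left_frame c2 Lc2.
have [q3 F3 D3] := right_frame d1 Ld1; have [q4 F4 D4] := right_frame d2 Ld2.
have [[a1 b1] [[a2 b2] [F12 F22 C12 D12]]] :=
  separate_two_maps (Q := fun q : A * A => frames q.1 q.2)
    (C := fun q => letter_before q.1) (D := fun q => letter_after q.2)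
    F1 F2 F3 F4 ltac:(by rewrite /= C1 C2) ltac:(by rewrite /= D3 D4).
case: F12 F22 C12 D12 => [E1 [s1 _ def_a1] [s3 def_b1]] [E2 [s1' _ def_a2] [s3' def_b2]].
move=> /= C12 D12.
exists a1, b1, a2, b2; split => //.
- by apply: contraNneq C12 => ->.
- by apply: contraNneq D12 => ->.
move: C12 D12; rewrite (letter_before_cat def_a1) (letter_before_cat def_a2).
rewrite (letter_after_cat def_b1) (letter_after_cat def_b2).
move=> /lcp_nth0_neq C12 /lcp_nth0_neq D12.
by rewrite def_a1 def_a2 def_b1 def_b2 lcs_catr /lcs C12 -!cat_cons lcp_catl D12 cats0.
Qed.
End Forward.

Lemma bispecial_ext_image_lcs_lcp u v :
  bispecial (lang Y) u -> ext_image X sigma l u v -> exists a1 b1 a2 b2,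
  [/\ ext_pair X v a1 b1, ext_pair X v a2 b2, a1 != a2, b1 != b2 &
      u = lcs (sigma a1) (sigma a2) ++ sw v ++ lcp (sigma b1) (sigma b2)].
Proof.
by move=> Bu /ext_image_shape[s [p' [def_u ls lp']]]; subst u; apply: bispecial_lcs_lcp.
Qed.

Lemma lang_image_ext_pair v a b r c S P r' : ext_pair X v a b ->
  sigma a = r ++ c :: S -> sigma b = P ++ r' ->
  lang Y (c :: S ++ sw v ++ P) /\ lang Y (rcons (S ++ sw v ++ P) (nth l r' 0)).
Proof.
move=> E def_a def_b; have [e Ee] := lang_rcons E.
have [w [def_e _]] := slp_image slp e.
have [rest def_rest] : exists rest, r' ++ sigma e = nth l r' 0 :: rest.
  by case: r' {def_b} => [|d r']; [exists w; rewrite def_e | exists (r' ++ sigma e)].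
split.
- apply: (lang_image_factor sigma_ne (t := a :: rcons v b) (s1 := r) (s2 := r')) => //.
  by rewrite sigma_word_cons sigma_word_rcons def_a def_b -!catA !cat_cons -!catA.
- apply: (lang_image_factor sigma_ne (s1 := rcons r c) (s2 := rest) Ee).
  rewrite sigma_word_rcons sigma_word_cons sigma_word_rcons def_a def_b.
  by rewrite !cat_rcons -def_rest -!catA cat_cons.
Qed.

Lemma lcs_lcp_bispecial_ext_image v a1 b1 a2 b2 :
  ext_pair X v a1 b1 -> ext_pair X v a2 b2 -> a1 != a2 -> b1 != b2 ->
  let u := lcs (sigma a1) (sigma a2) ++ sw v ++ lcp (sigma b1) (sigma b2) in
  bispecial (lang Y) u /\ ext_image X sigma l u v.
Proof.
move=> E1 E2 a12 b12 u.
have [r1 [r2 [c1 [c2 [def_a1 def_a2 c12]]]]] := lcs_sigma_neq a12.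
have [r1' [r2' [def_b1 def_b2 d12]]] := lcp_sigma_neq b12.
set S := lcs _ _ in u def_a1 def_a2 *; set P := lcp _ _ in u def_b1 def_b2 *.
have [L1 R1] := lang_image_ext_pair E1 def_a1 def_b1.
have [L2 R2] := lang_image_ext_pair E2 def_a2 def_b2.
have Lu : lang Y u by apply: (@lang_infix _ _ [:: c1] _ [::]); rewrite cats0.
have lP : l \in P.
  have [w1 [sb1 _]] := slp_image slp b1; have [w2 [sb2 _]] := slp_image slp b2.
  by rewrite /P sb1 sb2 /= eqxx mem_head.
have lu : l \in u by rewrite !mem_cat lP !orbT.
split; first by split; [|exists c1, c2 | exists (nth l r1' 0), (nth l r2' 0)].
split => //; first by case: (u) lu.
exists S, P, a1, b1; split => //.
- by apply: (@lang_infix _ _ [:: a1] _ [:: b1]); rewrite /= cats1.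
- rewrite def_a1 size_cat /= addnS ltnS leq_addl andbT.
  by apply/suffixP; exists (rcons r1 c1); rewrite cat_rcons.
- by rewrite def_b1 prefix_prefix; case: (P) lP.
Qed.
End ExtendedImages.

Theorem corollary4p2 (A B : finType) (X : (int -> A) -> Prop)
  (sigma : A -> seq B) (l : B) (v : seq A) :
  shift_space X ->
  non_erasing sigma ->
  injective (sigma_word sigma) ->
  strongly_left_proper sigma l ->
  lang X v ->
  (forall u : seq B,
     (bispecial (lang (image_space X sigma)) u /\ ext_image X sigma l u v) <->
     (exists (a1 b1 a2 b2 : A),
        [/\ ext_pair X v a1 b1, ext_pair X v a2 b2, a1 != a2, b1 != b2 &
            u = lcs (sigma a1) (sigma a2) ++ sigma_word sigma v
                ++ lcp (sigma b1) (sigma b2)]))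
  /\
  (forall u : seq B,
     bispecial (lang (image_space X sigma)) u -> ext_image X sigma l u v ->
     bispecial (lang X) v).
Proof.
move=> _ sigma_ne sw_inj slp _.
have lcs_lcp := bispecial_ext_image_lcs_lcp sigma_ne sw_inj slp.
split=> u.
- split=> [[Bu Eu]|[a1 [b1 [a2 [b2 [E1 E2 a12 b12 ->]]]]]]; first exact: lcs_lcp.
  exact: lcs_lcp_bispecial_ext_image.
- move=> Bu Eu; have [a1 [b1 [a2 [b2 [E1 E2 a12 b12 _]]]]] := lcs_lcp _ _ _ Bu Eu.
  exact: bispecial_of_ext_pairs E1 E2 a12 b12.
Qed.
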